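(* Given $x_0\in\mathbb{R}^{n_x}$ and a control $u\in U$, for every $t\in[0,T]$ the map $(y_1,\dots,y_T)\mapsto x(t)$ from $(\mathbb{R}^{n_y})^T$ to $\mathbb{R}^{n_x}$ is continuous, where $x$ denotes the solution of the hybrid system below starting at $x(0)=x_0$.
   Context: Fix positive integers $T,m,n_x,n_y$ and $\rho_{\max}\in(0,\infty)$; $B(0,\rho_{\max})$ is the closed Euclidean ball of radius $\rho_{\max}$ in $\mathbb{R}^m$; $U$ is the set of piecewise continuous $u:[0,T]\to\mathbb{R}^m$ with $\|u(t)\|_2\le\rho_{\max}$ for all $t$. $f:\mathbb{R}^{n_x}\times\mathbb{R}^m\to\mathbb{R}^{n_x}$ is continuously differentiable and there is $K_1\in[1,\infty)$ with $\|f(x',u')-f(x'',u'')\|_2\le K_1(\|x'-x''\|_2+\|u'-u''\|_2)$ for all $x',x''\in\mathbb{R}^{n_x}$, $u',u''\in B(0,\rho_{\max})$. $g:\mathbb{R}^{n_x}\times\mathbb{R}^{n_y}\to\mathbb{R}^{n_x}$ is continuous and differentiable in its first argument, and there are $K_2,\dots,K_5\ge0$ and positive integers $L_1,L_2$ such that for all $x,y$ both $\|g(x,y)\|_2$ and $\|\frac{\partial}{\partial x}g(x,y)\|_2$ are at most $K_2+K_3\|x\|_2^{L_1}+K_4\|y\|_2^{L_2}+K_5\|x\|_2^{L_1}\|y\|_2^{L_2}$. The hybrid system: $x_1$ on $[0,1]$ solves $\dot x_1=f(x_1,u)$, $x_1(0)=x_0$; for $i=2,\dots,T$, $x_i$ on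 $[i-1,i]$ solves $\dot x_i(t)=f(x_i(t),u(t))$ with $x_i(i-1)=g(x_{i-1}(i-1),y_{i-1})$; $x(t)=x_i(t)$ for $t\in[i-1,i)$, $i=1,\dots,T$, and $x(T)=g(x_T(T),y_T)$. *)

From HB Require Import structures.
From mathcomp Require Import all_boot all_order all_algebra.
From mathcomp Require Import all_classical all_reals all_analysis.
Set Implicit Arguments. Unset Strict Implicit. Unset Printing Implicit Defensive.
Import Order.TTheory GRing.Theory Num.Theory.
Import numFieldNormedType.Exports.
Local Open Scope classical_set_scope.
Local Open Scope ring_scope.

Section Defs.
Variable R : realType.

Definition enorm (n : nat) (v : 'rV[R]_n) : R :=
  Num.sqrt (\sum_(i < n) (v ord0 i) ^+ 2).

Definition piecewise_continuous (m : nat) (a b : R) (u : R -> 'rV[R]_m) : Prop :=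
  exists S : seq R,
    (forall t, a <= t <= b -> t \notin S ->
       u @ within [set x | a <= x <= b] (nbhs t) --> u t) /\
    (forall t, t \in S -> a <= t <= b ->
       (t < b -> cvg (u @ t^'+)) /\ (a < t -> cvg (u @ t^'-))).

(* z solves dz/dt = f(z,u) on [a,b]: z continuous on [a,b] and
   differentiable with z'(t) = f(z(t),u(t)) for all t in (a,b) outside a
   finite set (the usual notion for a piecewise continuous input u). *)
Definition ode_solution_on (nx m : nat) (f : 'rV[R]_nx -> 'rV[R]_m -> 'rV[R]_nx)
    (u : R -> 'rV[R]_m) (a b : R) (z : R -> 'rV[R]_nx) : Prop :=
  {within [set x | a <= x <= b], continuous z} /\
  exists S : seq R, forall t, a < t < b -> t \notin S ->
    is_derive t (1 : R) z (f (z t) (u t)).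

(* xs k is the piece x_{k+1} on [k, k+1] (k : 'I_T, i.e. i = k+1);
   y_{k+1} is the row k of the matrix Y : (R^ny)^T. *)
Definition hybrid_solution (T nx ny m : nat)
    (f : 'rV[R]_nx -> 'rV[R]_m -> 'rV[R]_nx) (g : 'rV[R]_nx -> 'rV[R]_ny -> 'rV[R]_nx)
    (u : R -> 'rV[R]_m) (x0 : 'rV[R]_nx) (Y : 'M[R]_(T, ny))
    (xs : 'I_T -> R -> 'rV[R]_nx) : Prop :=
  forall k : 'I_T,
    ode_solution_on f u k%:R (k%:R + 1) (xs k) /\
    (val k = 0%N -> xs k 0 = x0) /\
    (forall k' : 'I_T, val k = (val k').+1 ->
       xs k k%:R = g (xs k' k%:R) (row k' Y)).

(* the glued trajectory x(t): x(t) = x_i(t) on [i-1,i), x(T) = g(x_T(T), y_T) *)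
Definition hybrid_state (T nx ny : nat) (g : 'rV[R]_nx -> 'rV[R]_ny -> 'rV[R]_nx)
    (xs : 'I_T -> R -> 'rV[R]_nx) (Y : 'M[R]_(T, ny)) (t : R) : 'rV[R]_nx :=
  match [pick k : 'I_T | (k%:R <= t) && (t < k%:R + 1)] with
  | Some k => xs k t
  | None => match [pick k : 'I_T | k.+1 == T] with
            | Some k => g (xs k t) (row k Y)
            | None => 0
            end
  end.

End Defs.

From HB Require Import structures.
From mathcomp Require Import all_boot all_order all_algebra.
From mathcomp Require Import all_classical all_reals all_analysis.
From mathcomp Require Import lra.
Import Order.TTheory GRing.Theory Num.Theory.
Import numFieldNormedType.Exports archimedean.Num.Theory.
Local Open Scope classical_set_scope.
Local Open Scope ring_scope.
Set Implicit Arguments. Unset Strict Implicit.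

(** Two solutions [z1], [z2] of [z' = f(z, u)] on a unit interval satisfy
    [d/dt |z1 - z2|^2 <= (1 + K1^2) |z1 - z2|^2] outside a finite set, so by
    Gronwall's argument the state at any time of the interval depends
    continuously on the state at its left end.  The left-end value
    [x_i(i-1) = g(x_{i-1}(i-1), y_{i-1})] of each later piece is then
    continuous in [Y] by induction on [i], and [x(T)] is one more application
    of the continuous map [g]. *)

Section sqnorm.
Variable R : realType.

Definition sqnorm n (v : 'rV[R]_n) : R := \sum_(i < n) v ord0 i ^+ 2.

Lemma sqnorm_ge0 n (v : 'rV[R]_n) : 0 <= sqnorm v.
Proof. by apply: sumr_ge0 => i _; apply: sqr_ge0. Qed.

Lemma enorm_sqr n (v : 'rV[R]_n) : enorm v ^+ 2 = sqnorm v.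
Proof. exact: sqr_sqrtr (sqnorm_ge0 v). Qed.

Lemma enorm_ge0 n (v : 'rV[R]_n) : 0 <= enorm v.
Proof. exact: sqrtr_ge0. Qed.

Lemma sqnormN n (v : 'rV[R]_n) : sqnorm (- v) = sqnorm v.
Proof. by apply: eq_bigr => i _; rewrite mxE sqrrN. Qed.

Lemma sqnorm0 n : sqnorm (0 : 'rV[R]_n) = 0.
Proof. by rewrite /sqnorm big1 // => i _; rewrite mxE expr0n. Qed.

Lemma enorm0 n : enorm (0 : 'rV[R]_n) = 0.
Proof. by rewrite /enorm -/(sqnorm _) sqnorm0 sqrtr0. Qed.

Lemma sqr_coord_le_sqnorm n (v : 'rV[R]_n) j : v ord0 j ^+ 2 <= sqnorm v.
Proof.
by rewrite /sqnorm (bigD1 j) //= lerDl sumr_ge0 // => i _; apply: sqr_ge0.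
Qed.

Lemma mulr2_sum_le_sqnormD n (v w : 'rV[R]_n) :
  \sum_(i < n) 2 * v ord0 i * w ord0 i <= sqnorm v + sqnorm w.
Proof.
rewrite -big_split /=; apply: ler_sum => i _.
by have := sqr_ge0 (v ord0 i - w ord0 i); nra.
Qed.

Lemma mx_norm_le_enorm n (v : 'rV[R]_n) : `|v| <= enorm v.
Proof.
rewrite [`|v|]mx_normrE; apply: bigmax_le => [|[i j] _ /=]; first exact: enorm_ge0.
rewrite (ord1 i) -(ler_pXn2r (_ : 0 < 2)%N) ?nnegrE ?enorm_ge0 //.
by rewrite real_normK ?num_real // enorm_sqr sqr_coord_le_sqnorm.
Qed.

Lemma continuous_sqnorm n : continuous (@sqnorm n).
Proof.
have -> : @sqnorm n = \sum_(i < n) (fun v : 'rV[R]_n => v ord0 i ^+ 2).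
  by apply/funext => v; rewrite fct_sumE.
elim/big_ind: _ => [|f g cf cg|i _] v.
- exact: (@cst_continuous _ _ (0 : R)).
- exact: continuousD (cf v) (cg v).
- by apply: continuousM; exact: coord_continuous.
Qed.

Lemma continuous_sqnormP (T : topologicalType) n (F : T -> 'rV[R]_n) (y : T) :
  {for y, continuous F} <-> sqnorm (F z - F y) @[z --> y] --> 0.
Proof.
split=> [cF | F0].
  have cFy : {for y, continuous (fun z => F z - F y)}.
    by apply: continuousB cF _; exact: cst_continuous.
  rewrite -(sqnorm0 n) -(subrr (F y)).
  exact: continuous_comp cFy (@continuous_sqnorm n _).
apply/cvgrPdist_lt => e e0.
move/cvgrPdist_lt: F0 => /(_ _ (exprn_gt0 2 e0)).
apply: filterS => z; rewrite sub0r normrN ger0_norm ?sqnorm_ge0 // => hz.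
apply: le_lt_trans (mx_norm_le_enorm _) _.
rewrite -(ltr_pXn2r (_ : 0 < 2)%N) ?nnegrE ?enorm_ge0 ?ltW //.
by rewrite enorm_sqr -sqnormN opprB.
Qed.

Lemma is_derive_mx_entry p q (M : R -> 'M[R]_(p, q)) (t : R) dM i j :
  is_derive t 1 M dM -> is_derive t 1 (fun s => M s i j) (dM i j).
Proof.
move=> dMt; have dv : derivable M t 1 by case: dMt.
apply: DeriveDef; first by move/derivable_mxP: dv.
by move: (derive_mx dv); rewrite derive_val => ->; rewrite mxE.
Qed.

Lemma is_derive_sqnorm n (z : R -> 'rV[R]_n) (t : R) (dz : 'rV[R]_n) :
  is_derive t 1 z dz ->
  is_derive t 1 (fun s => sqnorm (z s)) (\sum_(i < n) 2 * z t ord0 i * dz ord0 i).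
Proof.
move=> dzt; rewrite /sqnorm -fct_sumE; apply: is_derive_sum => i.
by have := is_deriveX 2 (is_derive_mx_entry ord0 i dzt); rewrite /= expr1.
Qed.

End sqnorm.

Lemma ler0_derive_le_except (R : realType) (phi : R -> R) (S : seq R) (a b : R) :
  a <= b -> {within `[a, b], continuous phi} ->
  (forall t, a < t < b -> t \notin S -> exists2 D, is_derive t 1 phi D & D <= 0) ->
  phi b <= phi a.
Proof.
elim: S a b => [|s S IH] a b ab cphi dphi.
  have {}dphi t : t \in `]a, b[ -> derivable phi t 1 /\ derive1 phi t <= 0.
    rewrite in_itv /= => tab; have [//|D dD D0] := dphi t tab.
    by rewrite derive1E derive_val; split=> //; exact: ex_derive.
  apply: (ler0_derive1_le_cc _ _ cphi) => //; rewrite ?in_itv /= ?lexx ?ab //.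
  - by move=> t /dphi [].
  - by move=> t /dphi [].
have sub_itv x y : a <= x -> y <= b -> {within `[x, y], continuous phi}.
  move=> ax yb; apply: continuous_subspaceW cphi.
  by apply: subset_itv; rewrite bnd_simp.
have [/andP [a_s s_b]|s_out] := boolP (a < s < b).
  apply: (@le_trans _ _ (phi s)).
  - apply: (IH _ _ (ltW s_b) (sub_itv _ _ (ltW a_s) (lexx b))).
    move=> t /andP [st tb] tS.
    by apply: dphi; rewrite ?(lt_trans a_s st) ?tb // in_cons negb_or gt_eqF.
  - apply: (IH _ _ (ltW a_s) (sub_itv _ _ (lexx a) (ltW s_b))).
    move=> t /andP [a_t ts] tS.
    by apply: dphi; rewrite ?(lt_trans ts s_b) ?a_t // in_cons negb_or lt_eqF.
apply: IH => // t tab tS; apply: dphi => //; rewrite in_cons negb_or tS andbT.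
by apply: contraNneq s_out => <-.
Qed.

Lemma is_derive_expRM (R : realType) (k x : R) :
  is_derive x 1 (fun t => expR (k * t)) (expR (k * x) * k).
Proof.
have dk : is_derive x 1 ( *%R k) k.
  by rewrite -[X in is_derive _ _ _ X]mulr1; exact: is_deriveZ.
exact: is_derive1_comp _ dk.
Qed.

Section ode_continuous_dependence.
Variables (R : realType) (nx m : nat) (f : 'rV[R]_nx -> 'rV[R]_m -> 'rV[R]_nx).
Variables (u : R -> 'rV[R]_m) (rho K1 a b : R).
Hypothesis f_lip : forall (x' x'' : 'rV[R]_nx) (u' u'' : 'rV[R]_m),
  enorm u' <= rho -> enorm u'' <= rho ->
  enorm (f x' u' - f x'' u'') <= K1 * (enorm (x' - x'') + enorm (u' - u'')).
Hypothesis u_bound : forall t, a <= t <= b -> enorm (u t) <= rho.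

Lemma sqnorm_f_sub_le (x' x'' : 'rV[R]_nx) (v : 'rV[R]_m) : enorm v <= rho ->
  sqnorm (f x' v - f x'' v) <= K1 ^+ 2 * sqnorm (x' - x'').
Proof.
move=> v_rho; have := f_lip x' x'' v_rho v_rho.
rewrite subrr enorm0 addr0 -!enorm_sqr -exprMn => lip.
by apply: ler_pM; rewrite ?enorm_ge0.
Qed.

(* Gronwall: [s |-> e^(-C s) |z1 s - z2 s|^2] is nonincreasing for [C = 1 + K1^2]. *)
Lemma ode_solution_sqnorm_sub_le (z1 z2 : R -> 'rV[R]_nx) :
  ode_solution_on f u a b z1 -> ode_solution_on f u a b z2 ->
  forall t, a <= t <= b ->
  sqnorm (z1 t - z2 t) <= expR ((1 + K1 ^+ 2) * (t - a)) * sqnorm (z1 a - z2 a).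
Proof.
move=> [c1 [S1 d1]] [c2 [S2 d2]] t /andP [a_t t_b].
set C := 1 + K1 ^+ 2.
pose phi s := expR (- C * s) * sqnorm (z1 s - z2 s).
suff : phi t <= phi a.
  rewrite /phi -(ler_pM2l (expR_gt0 (C * t))) mulrA -expRD !mulNr subrr expR0 mul1r.
  by rewrite mulrA -expRD -mulrBr.
have cphi : {within `[a, b], continuous phi}.
  rewrite set_itvcc => s.
  apply: (@continuousM R (subspace [set z | a <= z <= b]) (fun s => expR (- C * s))
    (fun s => sqnorm (z1 s - z2 s)) s).
    apply: continuous_subspaceT => r.
    apply: continuous_comp; last exact: continuous_expR.
    by apply: continuousM; [apply: cst_continuous|apply: cvg_id].
  apply: continuous_comp; last exact: continuous_sqnorm.
  by apply: continuousB; [apply: c1|apply: c2].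
apply: (ler0_derive_le_except (S := S1 ++ S2) a_t).
  by apply: continuous_subspaceW cphi; apply: subset_itv; rewrite bnd_simp.
move=> s /andP [a_s s_t]; rewrite mem_cat negb_or => /andP [s1 s2].
have s_ab : a < s < b by rewrite a_s (lt_le_trans s_t t_b).
have dz := is_deriveB (d1 s s_ab s1) (d2 s s_ab s2).
eexists; first exact: is_deriveM (is_derive_expRM (- C) s) (is_derive_sqnorm dz).
set e := f (z1 s) (u s) - f (z2 s) (u s).
have e_le :
    \sum_(i < nx) 2 * (z1 s - z2 s) ord0 i * e ord0 i <= C * sqnorm (z1 s - z2 s).
  apply: le_trans (mulr2_sum_le_sqnormD _ _) _.
  rewrite mulrDl mul1r lerD2l sqnorm_f_sub_le // u_bound //.
  by rewrite (ltW a_s) (ltW (lt_le_trans s_t t_b)).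
have := expR_gt0 (- C * s); rewrite /GRing.scale /=; nra.
Qed.

Lemma ode_solution_continuous_initial (T : topologicalType)
    (z : T -> R -> 'rV[R]_nx) (y : T) :
  (forall w, ode_solution_on f u a b (z w)) ->
  {for y, continuous (fun w => z w a)} ->
  forall t, a <= t <= b -> {for y, continuous (fun w => z w t)}.
Proof.
move=> z_sol /continuous_sqnormP za t tab; apply/continuous_sqnormP.
set k := expR ((1 + K1 ^+ 2) * (t - a)).
apply: (@squeeze_cvgr _ _ _ _ (cst 0) (fun w => k * sqnorm (z w a - z y a))).
- apply: filterE => w; rewrite sqnorm_ge0 /=.
  exact: ode_solution_sqnorm_sub_le.
- exact: cvg_cst.
- by rewrite -(mulr0 k); apply: cvgM => //; exact: cvg_cst.
Qed.

End ode_continuous_dependence.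

Lemma mx_norm_row_le (R : realType) p q (k : 'I_p) (M : 'M[R]_(p, q)) :
  `|row k M| <= `|M|.
Proof.
rewrite [`|row k M|]mx_normrE [`|M|]mx_normrE.
apply: bigmax_le => [|[i j] _ /=]; first exact: bigmax_ge_id.
rewrite mxE; exact: (le_bigmax _ _ (k, j)).
Qed.

Lemma continuous_row (R : realType) p q (k : 'I_p) : continuous (@row R p q k).
Proof.
move=> Y; apply/(cvgrPdist_lt (FF := nbhs_filter Y)) => e e0.
near=> Z; rewrite -linearB; apply: le_lt_trans (mx_norm_row_le _ _) _.
near: Z; exact: (cvgrPdist_lt (FF := nbhs_filter Y) id Y).1 cvg_id _ e0.
Unshelve. all: by end_near.
Qed.

Section hybrid_continuity.
Variables (R : realType) (T m nx ny : nat) (rho K1 : R).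
Variables (f : 'rV[R]_nx -> 'rV[R]_m -> 'rV[R]_nx) (u : R -> 'rV[R]_m).
Variables (g : 'rV[R]_nx -> 'rV[R]_ny -> 'rV[R]_nx) (x0 : 'rV[R]_nx).
Variable xs : 'M[R]_(T, ny) -> 'I_T -> R -> 'rV[R]_nx.
Hypothesis f_lip : forall (x' x'' : 'rV[R]_nx) (u' u'' : 'rV[R]_m),
  enorm u' <= rho -> enorm u'' <= rho ->
  enorm (f x' u' - f x'' u'') <= K1 * (enorm (x' - x'') + enorm (u' - u'')).
Hypothesis g_cont : continuous (fun p : 'rV[R]_nx * 'rV[R]_ny => g p.1 p.2).
Hypothesis u_bound : forall t, 0 <= t <= T%:R -> enorm (u t) <= rho.
Hypothesis xs_sol : forall Y, hybrid_solution f g u x0 Y (xs Y).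

Lemma continuous_g_row (p : 'M[R]_(T, ny) -> 'rV[R]_nx) (k : 'I_T) Y :
  {for Y, continuous p} -> {for Y, continuous (fun Z => g (p Z) (row k Z))}.
Proof.
move=> cp; have row_k := @continuous_row R T ny k Y.
have pair := cvg_pair (FF := nbhs_filter Y) (FG := nbhs_filter _)
  (FH := nbhs_filter _) cp row_k.
exact: (continuous_comp pair (@g_cont (p Y, row k Y))).
Qed.

Lemma hybrid_piece_continuous (k : 'I_T) s :
  k%:R <= s <= k%:R + 1 -> continuous (fun Y => xs Y k s).
Proof.
have u_piece n : (n < T)%N -> forall t, n%:R <= t <= n%:R + 1 -> enorm (u t) <= rho.
  move=> n_lt t /andP [nt tn]; apply: u_bound.
  by rewrite (le_trans _ nt) //= (le_trans tn) // natr1 ler_nat.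
case: k => n; elim: n s => [|n IH] s n_lt s_itv Y.
  apply: (ode_solution_continuous_initial f_lip (u_piece 0%N n_lt)
    (z := fun Z => xs Z (Ordinal n_lt))) => //.
  - by move=> Z; exact: (xs_sol Z (Ordinal n_lt)).1.
  - rewrite (_ : (fun Z => _) = fun=> x0); first exact: cst_continuous.
    by apply/funext => Z; exact: (xs_sol Z (Ordinal n_lt)).2.1.
apply: (ode_solution_continuous_initial f_lip (u_piece _ n_lt)
  (z := fun Z => xs Z (Ordinal n_lt))) => //.
  by move=> Z; exact: (xs_sol Z _).1.
have n_lt' : (n < T)%N := ltnW n_lt.
rewrite (_ : (fun Z => _) =
    fun Z => g (xs Z (Ordinal n_lt') n.+1%:R) (row (Ordinal n_lt') Z)).
  by apply: continuous_g_row; apply: IH; rewrite natr1 lexx andbT ler_nat.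
by apply/funext => Z; exact: (xs_sol Z (Ordinal n_lt)).2.2 (Ordinal n_lt') erefl.
Qed.

End hybrid_continuity.

Theorem proposition5 (R : realType) (T m nx ny : nat)
  (hT : (0 < T)%N) (hm : (0 < m)%N) (hnx : (0 < nx)%N) (hny : (0 < ny)%N)
  (rho_max : R) (hrho : 0 < rho_max)
  (f : 'rV[R]_nx -> 'rV[R]_m -> 'rV[R]_nx)
  (hf_diff : forall p : 'rV[R]_nx * 'rV[R]_m,
      differentiable (fun q : 'rV[R]_nx * 'rV[R]_m => f q.1 q.2) p)
  (hf_C1 : forall v : 'rV[R]_nx * 'rV[R]_m,
      continuous (fun p : 'rV[R]_nx * 'rV[R]_m =>
        'd (fun q : 'rV[R]_nx * 'rV[R]_m => f q.1 q.2) p v))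
  (K1 : R) (hK1 : 1 <= K1)
  (hf_lip : forall (x' x'' : 'rV[R]_nx) (u' u'' : 'rV[R]_m),
      enorm u' <= rho_max -> enorm u'' <= rho_max ->
      enorm (f x' u' - f x'' u'') <= K1 * (enorm (x' - x'') + enorm (u' - u'')))
  (g : 'rV[R]_nx -> 'rV[R]_ny -> 'rV[R]_nx)
  (hg_cont : continuous (fun p : 'rV[R]_nx * 'rV[R]_ny => g p.1 p.2))
  (hg_diff : forall (x : 'rV[R]_nx) (y : 'rV[R]_ny), differentiable (g^~ y) x)
  (K2 K3 K4 K5 : R) (hK2 : 0 <= K2) (hK3 : 0 <= K3) (hK4 : 0 <= K4) (hK5 : 0 <= K5)
  (L1 L2 : nat) (hL1 : (0 < L1)%N) (hL2 : (0 < L2)%N)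
  (hg_bound : forall (x : 'rV[R]_nx) (y : 'rV[R]_ny),
      enorm (g x y) <= K2 + K3 * enorm x ^+ L1 + K4 * enorm y ^+ L2
                        + K5 * enorm x ^+ L1 * enorm y ^+ L2)
  (hdg_bound : forall (x : 'rV[R]_nx) (y : 'rV[R]_ny) (v : 'rV[R]_nx),
      enorm ('d (g^~ y) x v) <= (K2 + K3 * enorm x ^+ L1 + K4 * enorm y ^+ L2
                        + K5 * enorm x ^+ L1 * enorm y ^+ L2) * enorm v)
  (x0 : 'rV[R]_nx) (u : R -> 'rV[R]_m)
  (hu_pc : piecewise_continuous 0 T%:R u)
  (hu_bound : forall t, 0 <= t <= T%:R -> enorm (u t) <= rho_max)
  (xs : 'M[R]_(T, ny) -> 'I_T -> R -> 'rV[R]_nx)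
  (hxs : forall Y : 'M[R]_(T, ny), hybrid_solution f g u x0 Y (xs Y)) :
  forall t : R, 0 <= t <= T%:R ->
    continuous (fun Y : 'M[R]_(T, ny) => hybrid_state g (xs Y) Y t).
Proof.
move=> t /andP [t_ge0 t_le]; rewrite /hybrid_state.
have piece := hybrid_piece_continuous hf_lip hg_cont hu_bound hxs.
case: pickP => [k /andP [kt tk] | no_piece]; first by apply: piece; rewrite kt ltW.
case: pickP => [k /eqP kT | _]; last exact: cst_continuous.
have tT : t = T%:R.
  apply/eqP; rewrite eq_le t_le leNgt; apply/negP => tT.
  have t_lt : (Num.truncn t < T)%N by rewrite truncn_lt_nat.
  by have := no_piece (Ordinal t_lt); rewrite /= natr1 truncn_itv.
move=> Y; apply: (continuous_g_row hg_cont); apply: piece.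
by rewrite tT natr1 kT lexx andbT ler_nat ltnW.
Qed.
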